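(* Let $\lambda$ be a nonempty partition with Frobenius coordinates $(\vec s|\vec t)$ of rank $d$. Then, as rational functions of $R$, $$\tilde s^{(R)}_\lambda=\left|\tilde s^{(R)}_{(s_i|t_j)}\right|_{d\times d}=\left|\frac{\Gamma(R-t_j)/\Gamma(R+s_i+1)}{s_i!\,t_j!\,(1+s_i+t_j)}\right|_{d\times d}.$$
   Context: For an integer $m\ge0$, $\tilde h^{(R)}_m:=\frac{(R-1)!}{(R+m-1)!\,m!}=\frac{1}{m!\,R(R+1)\cdots(R+m-1)}$, and $\tilde h^{(R)}_m:=0$ for $m<0$. For a partition $\mu$ with $l(\mu)$ parts, $\tilde s^{(R)}_\mu:=\left|\tilde h^{(R-j+1)}_{\mu_i-i+j}\right|_{l(\mu)\times l(\mu)}$ (determinant). Frobenius coordinates of a partition of rank $d$ (number of $i$ with $\lambda_i\ge i$): $s_i=\lambda_i-i$, $t_i=\lambda^t_i-i$; $(s|t)$ denotes the hook partition $(s+1,1^t)$. $\Gamma(R-t)/\Gamma(R+s+1)=1/\big((R-t)(R-t+1)\cdots(R+s)\big)$. *)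

From HB Require Import structures.
From mathcomp Require Import all_boot all_order all_algebra fraction.
Set Implicit Arguments. Unset Strict Implicit. Unset Printing Implicit Defensive.
Import Order.TTheory GRing.Theory Num.Theory.
Local Open Scope ring_scope.

(* A partition: a nonincreasing sequence of positive naturals (lambda_1 = nth 0 l 0). *)
Definition is_partition (l : seq nat) : bool :=
  sorted geq l && all (fun x => 0 < x)%N l.

(* conjugate part lambda^t_i (1-indexed i) = #{k | lambda_k >= i} *)
Definition conj_part (l : seq nat) (i : nat) : nat := count (fun x => i <= x)%N l.

(* rank d = #{i >= 1 | lambda_i >= i} *)
Definition part_rank (l : seq nat) : nat :=
  count (fun i => i <= nth 0%N l i.-1)%N (iota 1 (size l)).

(* Frobenius coordinates, 0-indexed: frob_s l i = s_{i+1} = lambda_{i+1} - (i+1),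
   frob_t l i = t_{i+1} = lambda^t_{i+1} - (i+1). *)
Definition frob_s (l : seq nat) (i : nat) : nat := (nth 0%N l i - i.+1)%N.
Definition frob_t (l : seq nat) (i : nat) : nat := (conj_part l i.+1 - i.+1)%N.

(* hook partition (s|t) = (s+1, 1^t) *)
Definition hook (s t : nat) : seq nat := s.+1 :: nseq t 1%N.

Definition htilde (F : fieldType) (R : F) (m : int) : F :=
  match m with
  | Posz n => (n`!%:R * \prod_(k < n) (R + k%:R))^-1
  | Negz _ => 0
  end.

(* \tilde s^{(R)}_mu = det [ \tilde h^{(R-j+1)}_{mu_i - i + j} ]  (1-indexed i,j);
   with 0-indexed i0, j0 this is \tilde h^{(R - j0)}_{mu_{i0} - i0 + j0}. *)
Definition stilde (F : fieldType) (R : F) (mu : seq nat) : F :=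
  \det (\matrix_(i < size mu, j < size mu)
          htilde (R - (j : nat)%:R) ((nth 0%N mu i)%:Z - (i : nat)%:Z + (j : nat)%:Z)).

(* Gamma(R-t)/Gamma(R+s+1) = 1/((R-t)(R-t+1)...(R+s)) *)
Definition gamma_ratio (F : fieldType) (R : F) (s t : nat) : F :=
  (\prod_(k < s + t + 1) (R - t%:R + k%:R))^-1.

Definition ratfun := {fraction {poly rat}}.
Definition RX : ratfun := @tofrac _ 'X.

(* Write n = size lambda and beta_i = lambda_i + n - 1 - i (0-indexed).  The
   (i, j) entry of the matrix defining s~_lambda is 1 / (beta_i - (n - 1 - j))!
   times a rising factorial in R depending only on j divided by one depending
   only on i, so s~_lambda is a ratio of rising factorials times the
   falling-factorial Vandermonde determinant Delta(beta) / prod_i beta_i!.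
   The beta_i with i >= d together with the n - 1 - t_j (j < d) are exactly
   0, ..., n - 1, while beta_i = s_i + n for i < d; this turns the expression
   into the Frobenius form
     prod_j Gamma(R - t_j)/Gamma(R + s_j + 1) * Delta(s) Delta(t)
       / (prod_j s_j! t_j! * prod_(i,j) (s_i + t_j + 1)).
   For a hook (s|t), of rank 1, this is the (s, t) entry of the d x d matrix,
   and the Cauchy determinant det [1 / (x_i + y_j)] = Delta(x) Delta(y) /
   prod (x_i + y_j), with x_i = s_i + 1 and y_j = t_j, shows that the
   determinant of that matrix has the same value. *)

From HB Require Import structures.
From mathcomp Require Import all_boot all_order all_algebra fraction.
From mathcomp Require Import perm zify ring.
Set Implicit Arguments. Unset Strict Implicit. Unset Printing Implicit Defensive.
Import GRing.Theory Num.Theory.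
Local Open Scope ring_scope.

Lemma count_iota_downclosed (P : pred nat) n i : (forall k, P k.+1 -> P k) ->
  (i < n)%N -> P i = (i < count P (iota 0 n))%N.
Proof.
move=> Pdown; elim: n => [|n IHn] // ltin.
rewrite -[n.+1]addn1 iotaD count_cat /= addn0 add0n.
have cnt_le : (count P (iota 0 n) <= n)%N by rewrite -{2}(size_iota 0 n) count_size.
case Pn: (P n); last first.
  rewrite addn0; case: (ltnP i n) => [/IHn // | lenin].
  have -> : i = n by lia.
  by rewrite Pn ltnNge cnt_le.
have Ple k : (k <= n)%N -> P k.
  move=> lekn; rewrite -(subKn lekn); elim: (n - k)%N (leq_subr k n) => [|m IHm] lemn.
    by rewrite subn0.
  by apply: Pdown; rewrite subnSK // IHm // ltnW.
have -> : count P (iota 0 n) = n.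
  rewrite (eq_in_count (a2 := predT)) ?count_predT ?size_iota // => k.
  by rewrite mem_iota add0n => /andP [_ /ltnW /Ple].
by rewrite addn1 ltin Ple.
Qed.

Lemma sorted_geq_nth (mu : seq nat) i j : sorted geq mu -> (i <= j)%N ->
  (nth 0%N mu j <= nth 0%N mu i)%N.
Proof.
move=> mu_sorted leij; case: (ltnP j (size mu)) => [ltj | lej]; last by rewrite nth_default.
have geq_trans : transitive geq by move=> a b c /= le_ab le_ca; apply: leq_trans le_ca le_ab.
by apply: (sorted_leq_nth geq_trans leqnn 0%N mu_sorted); rewrite ?inE // (leq_ltn_trans leij).
Qed.

Lemma part_rank_le_size (mu : seq nat) : (part_rank mu <= size mu)%N.
Proof. by rewrite /part_rank -{2}(size_iota 1 (size mu)) count_size. Qed.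

Lemma uniq_map_iota (T : eqType) (f : nat -> T) a m :
  {in iota a m &, forall i j, (i < j)%N -> f i != f j} -> uniq (map f (iota a m)).
Proof.
move=> f_neq; rewrite map_inj_in_uniq ?iota_uniq // => i j iI jI /eqP eq_f.
case: (ltngtP i j) => // [ltij | ltji]; first by case/negP: (f_neq i j iI jI ltij).
by case/negP: (f_neq j i jI iI ltji); rewrite eq_sym.
Qed.

Definition beta (mu : seq nat) i := (nth 0%N mu i + (size mu - i.+1))%N.
Definition cobeta (mu : seq nat) j := (size mu - (frob_t mu j).+1)%N.

Section FrobeniusCoordinates.

Variable mu : seq nat.
Hypothesis mu_sorted : sorted geq mu.
Local Notation n := (size mu).
Local Notation d := (part_rank mu).

Lemma leq_nth_conj_part i b : (0 < b)%N ->
  (b <= nth 0%N mu i)%N = (i < conj_part mu b)%N.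
Proof.
move=> b_gt0; rewrite /conj_part -[in count _ mu](mkseq_nth 0%N mu) count_map.
case: (ltnP i n) => [ltin | lein].
  apply: (count_iota_downclosed (P := fun k => b <= nth 0%N mu k)%N) => // k /=.
  by move/leq_trans; apply; apply: sorted_geq_nth.
rewrite nth_default // leqNgt b_gt0 ltnNge (leq_trans _ lein) //.
by rewrite -{2}(size_iota 0 n) count_size.
Qed.

Lemma ltn_part_rank i : (i < n)%N -> (i < d)%N = (i < nth 0%N mu i)%N.
Proof.
move=> ltin; symmetry.
have -> : d = count (fun k => k < nth 0%N mu k)%N (iota 0 n).
  by rewrite /part_rank -[1%N]/(1 + 0)%N iotaDl count_map.
apply: (count_iota_downclosed (P := fun k => k < nth 0%N mu k)%N) => // k ltk.
exact: leq_trans (ltnW ltk) (sorted_geq_nth mu_sorted (leqnSn k)).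
Qed.

Lemma lt_rank_nth i : (i < d)%N -> (i < nth 0%N mu i)%N.
Proof. by move=> ltid; rewrite -ltn_part_rank // (leq_trans ltid) ?part_rank_le_size. Qed.

Lemma ge_rank_nth i : (d <= i)%N -> (i < n)%N -> (nth 0%N mu i <= i)%N.
Proof. by move=> leid ltin; move: leid; rewrite leqNgt ltn_part_rank // -leqNgt. Qed.

Lemma beta_frob_s i : (i < d)%N -> beta mu i = (frob_s mu i + n)%N.
Proof.
move=> ltid; have := lt_rank_nth ltid; have := leq_trans ltid (part_rank_le_size mu).
rewrite /beta /frob_s; lia.
Qed.

Lemma ltn_beta i j : (i < j)%N -> (j < n)%N -> (beta mu j < beta mu i)%N.
Proof. by move=> ltij ltjn; have := sorted_geq_nth mu_sorted (ltnW ltij); rewrite /beta; lia. Qed.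

Lemma lt_conj_part j : (j < d)%N -> (j < conj_part mu j.+1)%N.
Proof. by move=> ltjd; rewrite -leq_nth_conj_part // lt_rank_nth. Qed.

Lemma frob_t_lt_size j : (j < d)%N -> (frob_t mu j < n)%N.
Proof.
move=> ltjd; have := lt_conj_part ltjd; have := count_size (fun x => j < x)%N mu.
rewrite /frob_t /conj_part; lia.
Qed.

Lemma ltn_frob_t i j : (i < j)%N -> (j < d)%N -> (frob_t mu j < frob_t mu i)%N.
Proof.
move=> ltij ltjd; have := lt_conj_part ltjd.
have : (conj_part mu j.+1 <= conj_part mu i.+1)%N.
  by apply: sub_count => x /=; apply: leq_trans; rewrite ltnS ltnW.
rewrite /frob_t; lia.
Qed.

Lemma beta_neq_cobeta i j : (d <= i)%N -> (i < n)%N -> (j < d)%N -> beta mu i != cobeta mu j.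
Proof.
move=> leid ltin ltjd; have := frob_t_lt_size ltjd; have := lt_conj_part ltjd.
have := leq_nth_conj_part i (ltn0Sn j); rewrite /beta /cobeta /frob_t.
case: (leqP j.+1 (nth 0%N mu i)) => [? /esym | ? /esym/negbT] conj_i lt_conj lt_t;
  by apply/negP => /eqP; lia.
Qed.

Lemma perm_eq_beta_cobeta :
  perm_eq ([seq beta mu i | i <- iota d (n - d)] ++ [seq cobeta mu j | j <- iota 0 d])
          (iota 0 n).
Proof.
have le_dn := part_rank_le_size mu.
have mem_beta i : i \in iota d (n - d) = (d <= i < n)%N by rewrite mem_iota subnKC.
have mem_cobeta j : j \in iota 0 d = (j < d)%N by rewrite mem_iota.
set s := _ ++ _.
have s_sub : {subset s <= iota 0 n}.
  move=> x; rewrite mem_cat mem_iota add0n.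
  case/orP=> /mapP [k]; rewrite ?mem_beta ?mem_cobeta.
    by case/andP=> leid ltin ->; have := ge_rank_nth leid ltin; rewrite /beta; lia.
  by move=> ltkd ->; rewrite /cobeta; lia.
have s_uniq : uniq s.
  rewrite cat_uniq; apply/and3P; split.
  - apply: uniq_map_iota => i j; rewrite !mem_beta => /andP [_ ltin] /andP [_ ltjn] ltij.
    by rewrite neq_ltn (ltn_beta ltij ltjn) orbT.
  - apply/hasPn => x /mapP [j]; rewrite mem_cobeta => ltjd ->.
    apply/mapP=> [[i]]; rewrite mem_beta => /andP [leid ltin] eq_x.
    by move: (beta_neq_cobeta leid ltin ltjd); rewrite -eq_x eqxx.
  - apply: uniq_map_iota => i j; rewrite !mem_cobeta => ltid ltjd ltij.
    have := ltn_frob_t ltij ltjd; have := frob_t_lt_size ltid.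
    by rewrite /cobeta => ? ?; apply/negP => /eqP; lia.
have s_size : (size (iota 0 n) <= size s)%N.
  by rewrite size_cat !size_map !size_iota subnK.
have [_ s_eq] := uniq_min_size s_uniq s_sub s_size.
exact: uniq_perm s_uniq (iota_uniq 0 n) s_eq.
Qed.

End FrobeniusCoordinates.

Lemma hook_sorted s t : sorted geq (hook s t).
Proof. by rewrite /hook /=; case: t => //= t; elim: t. Qed.

Lemma part_rank_hook s t : part_rank (hook s t) = 1%N.
Proof.
rewrite /part_rank /= size_nseq /= (@eq_in_count _ _ pred0) ?count_pred0 // => i.
by rewrite mem_iota; case: i => [|[|i]] //= _; rewrite nth_nseq; case: ifP.
Qed.

Lemma frob_s_hook s t : frob_s (hook s t) 0 = s.
Proof. by rewrite /frob_s subn1. Qed.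

Lemma frob_t_hook s t : frob_t (hook s t) 0 = t.
Proof. by rewrite /frob_t /conj_part /= count_nseq mul1n add1n subn1. Qed.

Definition Delta (R : pzRingType) (f : nat -> R) (a b : nat) : R :=
  \prod_(a <= i < b) \prod_(i.+1 <= j < b) (f i - f j).

Section Vandermonde.

Variable R : comPzRingType.

Lemma Delta_recl (f : nat -> R) n :
  Delta f 0 n.+1 = (\prod_(0 <= j < n) (f 0%N - f j.+1)) * Delta (fun i => f i.+1) 0 n.
Proof.
rewrite /Delta big_nat_recl // big_add1; congr (_ * _).
by apply: eq_big_nat => i _; rewrite big_add1.
Qed.

Lemma Delta_ord (f : nat -> R) n :
  Delta f 0 n = \prod_(i < n) \prod_(j < n | (i < j)%N) (f i - f j).
Proof. by rewrite /Delta big_mkord; apply: eq_bigr => i _; rewrite big_geq_mkord. Qed.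

Lemma Delta_rev (f : nat -> R) n :
  \prod_(i < n) \prod_(j < n | (i < j)%N) (f (rev_ord j) - f (rev_ord i)) = Delta f 0 n.
Proof.
have lt_rev (i j : 'I_n) : (rev_ord i < rev_ord j)%N = (j < i)%N.
  by rewrite /=; have := ltn_ord i; have := ltn_ord j; lia.
rewrite Delta_ord (reindex_inj rev_ord_inj).
under eq_bigr => i _ do rewrite (reindex_inj rev_ord_inj) !rev_ordK.
under eq_bigr => i _ do under eq_bigl => j do rewrite lt_rev.
rewrite (exchange_big_dep xpredT) //=.
by apply: eq_bigr => i _; apply: eq_bigr => j _; congr (f _ - _); have := ltn_ord i; lia.
Qed.

Lemma det_diag_row n (f : nat -> R) :
  \det (diag_mx (\row_(i < n) f i)) = \prod_(0 <= i < n) f i.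
Proof. by rewrite det_diag big_mkord; apply: eq_bigr => i _; rewrite mxE. Qed.

Lemma det_rev_ord n (A : 'M[R]_n) :
  \det (\matrix_(i, j) A (rev_ord i) (rev_ord j)) = \det A.
Proof.
pose s : 'S_n := perm rev_ord_inj.
have -> : \matrix_(i, j) A (rev_ord i) (rev_ord j) = row_perm s (col_perm s A).
  by apply/matrixP => i j; rewrite !mxE !permE.
rewrite row_permE col_permE !det_mulmx !det_perm odd_permV mulrA mulrC mulrA.
by rewrite -signr_addb addbb mul1r.
Qed.

End Vandermonde.

Section FallingFactorialVandermonde.

Variable R : comNzRingType.

Lemma det_monic_vandermonde n (b : 'I_n -> R) (p : nat -> {poly R}) :
  (forall j, p j \is monic) -> (forall j, size (p j) = j.+1) ->
  \det (\matrix_(i, j) (p j).[b i] : 'M[R]_n) = \det (\matrix_(i < n, j < n) b i ^+ j).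
Proof.
move=> p_monic size_p; pose C := \matrix_(k < n, j < n) (p j)`_k.
have -> : \matrix_(i, j) (p j).[b i] = \matrix_(i < n, k < n) b i ^+ k *m C.
  apply/matrixP => i j; rewrite !mxE (horner_coef_wide _ (n := n)) ?size_p //.
  by apply: eq_bigr => k _; rewrite !mxE mulrC.
rewrite det_mulmx; suff -> : \det C = 1 by rewrite mulr1.
rewrite -det_tr det_trig; last first.
  by apply/is_trig_mxP => i j ltij; rewrite !mxE nth_default // size_p.
by apply: big1 => i _; rewrite !mxE -(monicP (p_monic i)) /lead_coef size_p.
Qed.

Definition ffact_poly j : {poly R} := \prod_(k < j) ('X - k%:R%:P).

Lemma ffact_poly_monic j : ffact_poly j \is monic.
Proof. by apply: monic_prod => k _; apply: monicXsubC. Qed.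

Lemma size_ffact_poly j : size (ffact_poly j) = j.+1.
Proof. by rewrite size_prod_XsubC [index_enum _]unlock -enumT size_enum_ord. Qed.

Lemma det_ffact_vandermonde n (a : nat -> R) :
  \det (\matrix_(i < n, j < n) \prod_(k < n - j.+1) (a i - k%:R)) = Delta a 0 n.
Proof.
rewrite -det_rev_ord.
transitivity (\det (\matrix_(i, j) (ffact_poly j).[a (rev_ord i)] : 'M[R]_n)).
  congr (\det _); apply/matrixP => i j; rewrite !mxE horner_prod /=.
  have -> : (n - (n - j.+1).+1 = j)%N by have := ltn_ord j; lia.
  by apply: eq_bigr => k _; rewrite hornerXsubC.
rewrite (det_monic_vandermonde _ ffact_poly_monic size_ffact_poly).
rewrite -det_tr -Delta_rev.
have -> : (\matrix_(i < n, j < n) a (rev_ord i) ^+ j)^T = Vandermonde n (\row_j a (rev_ord j)).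
  by apply/matrixP => i j; rewrite !mxE.
by rewrite det_Vandermonde; apply: eq_bigr => i _; apply: eq_bigr => j _; rewrite !mxE.
Qed.

End FallingFactorialVandermonde.

Section FrobeniusProducts.

Variable R : comPzRingType.

Lemma natr_fact_prod_lt a N : (a <= N)%N ->
  a`!%:R = \prod_(0 <= m < N) (if (m < a)%N then a%:R - m%:R else 1) :> R.
Proof.
move=> leaN; rewrite (big_cat_nat (leq0n a) leaN) /= [X in _ * X]big_nat_cond.
rewrite [X in _ * X]big1 => [|m /andP [/andP [leam _] _]]; last by rewrite ltnNge leam.
rewrite mulr1 -ffactnn ffact_prod natr_prod big_mkord; apply: eq_bigr => i _.
by rewrite ltn_ord natrB // ltnW.
Qed.

Lemma natr_fact_prod_gt u N : (u < N)%N ->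
  (N - u.+1)`!%:R = \prod_(0 <= m < N) (if (u < m)%N then m%:R - u%:R else 1) :> R.
Proof.
move=> ltuN; rewrite (big_cat_nat (leq0n u.+1) ltuN) /= [X in X * _]big_nat_cond.
rewrite [X in X * _]big1 => [|m /andP [/andP [_ ltmu] _]]; last by rewrite ltnNge -ltnS ltmu.
rewrite mul1r fact_prod natr_prod big_add1 -[in RHS](add0n u.+1) big_addn.
by apply: eq_big_nat => k _; rewrite leq_add2r leq0n addnS -addSn natrD addrK.
Qed.

Lemma natr_fact_addn s N :
  (s + N)`!%:R = s`!%:R * \prod_(0 <= m < N) ((s + N)%:R - m%:R) :> R.
Proof.
rewrite -(ffact_fact (leq_addl s N)) addnK natrM mulrC ffact_prod natr_prod big_mkord.
by congr (_ * _); apply: eq_bigr => i _; rewrite natrB // ltnW // ltn_addl.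
Qed.

Variable mu : seq nat.
Hypothesis mu_sorted : sorted geq mu.
Local Notation n := (size mu).
Local Notation d := (part_rank mu).
Local Notation betaR := (fun i => (beta mu i)%:R : R).
Local Notation sR := (fun i => (frob_s mu i)%:R : R).
Local Notation tR := (fun i => (frob_t mu i)%:R : R).

Lemma prod_beta_cobeta (g : nat -> R) :
  \prod_(0 <= m < n) g m =
  (\prod_(d <= i < n) g (beta mu i)) * \prod_(0 <= j < d) g (cobeta mu j).
Proof.
rewrite {1}/index_iota subn0 -(perm_big _ (perm_eq_beta_cobeta mu_sorted)).
by rewrite big_cat /= !big_map /index_iota subn0.
Qed.

Lemma natr_cobeta j : (j < d)%N -> (cobeta mu j)%:R = n%:R - (frob_t mu j)%:R - 1 :> R.
Proof.
move=> ltjd; have := frob_t_lt_size mu_sorted ltjd.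
by rewrite /cobeta => lttn; rewrite natrB // -addn1 natrD opprD addrA.
Qed.

Let head_tail := \prod_(0 <= i < d) \prod_(d <= k < n) (betaR i - betaR k).
Let hook_prod := \prod_(0 <= i < d) \prod_(0 <= j < d) (frob_s mu i + frob_t mu j + 1)%:R : R.
Let tail_cobeta := \prod_(d <= i < n) \prod_(0 <= j < d)
  (if (cobeta mu j < beta mu i)%N then betaR i - (cobeta mu j)%:R else 1).

Lemma Delta_beta_split : Delta betaR 0 n = Delta sR 0 d * head_tail * Delta betaR d n.
Proof.
have le_dn := part_rank_le_size mu.
rewrite /Delta (big_cat_nat (leq0n d) le_dn) /=; congr (_ * _).
rewrite /head_tail -big_split /=; apply: eq_big_nat => i /andP [_ ltid].
rewrite (big_cat_nat ltid le_dn) /=; congr (_ * _).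
by apply: eq_big_nat => j /andP [_ ltjd]; rewrite !beta_frob_s // !natrD; ring.
Qed.

Lemma prod_fact_beta_head :
  \prod_(0 <= i < d) (beta mu i)`!%:R =
  \prod_(0 <= i < d) (frob_s mu i)`!%:R * head_tail * hook_prod :> R.
Proof.
rewrite /head_tail /hook_prod -!big_split /=; apply: eq_big_nat => i /andP [_ ltid].
rewrite beta_frob_s // natr_fact_addn prod_beta_cobeta -mulrA; congr (_ * (_ * _)).
by apply: eq_big_nat => j /andP [_ ltjd]; rewrite natr_cobeta // !natrD; ring.
Qed.

Lemma prod_fact_beta_tail :
  \prod_(d <= i < n) (beta mu i)`!%:R = Delta betaR d n * tail_cobeta :> R.
Proof.
rewrite /Delta /tail_cobeta -big_split /=; apply: eq_big_nat => i /andP [ledi ltin].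
have le_beta_n : (beta mu i <= n)%N.
  by have := ge_rank_nth mu_sorted ledi ltin; rewrite /beta; lia.
rewrite (natr_fact_prod_lt le_beta_n) prod_beta_cobeta; congr (_ * _).
rewrite (big_cat_nat (n := i.+1)) ?leqW //= big_nat_cond big1 ?mul1r.
  by apply: eq_big_nat => k /andP [ltik ltkn]; rewrite ltn_beta.
move=> k /andP [/andP [ledk]]; rewrite ltnS leq_eqVlt => /orP [/eqP -> | ltki] _.
  by rewrite ltnn.
by rewrite ltnNge ltnW // ltn_beta.
Qed.

Lemma prod_fact_frob_t :
  \prod_(0 <= j < d) (frob_t mu j)`!%:R = tail_cobeta * Delta tR 0 d :> R.
Proof.
rewrite /tail_cobeta exchange_big_nat /Delta -big_split /=.
apply: eq_big_nat => j /andP [_ ltjd]; have lttn := frob_t_lt_size mu_sorted ltjd.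
have ltcn : (cobeta mu j < n)%N by rewrite /cobeta; lia.
have t_cobeta : frob_t mu j = (n - (cobeta mu j).+1)%N by rewrite /cobeta; lia.
rewrite {1}t_cobeta (natr_fact_prod_gt ltcn) prod_beta_cobeta; congr (_ * _).
have lt_cobeta k l : (k < l)%N -> (l < d)%N -> (cobeta mu k < cobeta mu l)%N.
  move=> ltkl ltld; have := ltn_frob_t mu_sorted ltkl ltld.
  have := frob_t_lt_size mu_sorted (ltn_trans ltkl ltld); rewrite /cobeta; lia.
rewrite (big_cat_nat (n := j.+1)) //= big_nat_cond big1 ?mul1r.
  by apply: eq_big_nat => k /andP [ltjk ltkd]; rewrite lt_cobeta // !natr_cobeta //; ring.
move=> k /andP [/andP [_]]; rewrite ltnS leq_eqVlt => /orP [/eqP -> | ltkj] _.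
  by rewrite ltnn.
by rewrite ltnNge ltnW // lt_cobeta.
Qed.

Lemma Delta_beta_frobenius :
  Delta betaR 0 n * \prod_(0 <= i < d) (frob_s mu i)`!%:R
    * \prod_(0 <= j < d) (frob_t mu j)`!%:R * hook_prod
  = Delta sR 0 d * Delta tR 0 d * \prod_(0 <= i < n) (beta mu i)`!%:R.
Proof.
rewrite (big_cat_nat (leq0n d) (part_rank_le_size mu)) /=.
rewrite prod_fact_beta_head prod_fact_beta_tail prod_fact_frob_t Delta_beta_split; ring.
Qed.

End FrobeniusProducts.

Lemma prodf_nat_neq0 (R : idomainType) (g : nat -> R) a b :
  (forall i, g i != 0) -> \prod_(a <= i < b) g i != 0.
Proof. by move=> g_neq0; rewrite prodf_seq_neq0; apply/allP => i _; apply: g_neq0. Qed.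

Section CauchyDeterminant.

Variable F : fieldType.

Lemma det_schur_complement n (f : nat -> nat -> F) : f 0%N 0%N != 0 ->
  \det (\matrix_(i < 1 + n, j < 1 + n) f i j) =
  f 0%N 0%N * \det (\matrix_(i < n, j < n) (f i.+1 j.+1 - f i.+1 0%N * f 0%N j.+1 / f 0%N 0%N)).
Proof.
set M := \matrix_(i, j) f i j; set c := f 0%N 0%N => c_neq0.
have M_LU : M = block_mx 1 0 (c^-1 *: dlsubmx M) 1 *m
   block_mx (ulsubmx M) (ursubmx M) 0 (drsubmx M - c^-1 *: (dlsubmx M *m ursubmx M)).
  rewrite mulmx_block ?mul1mx ?mul0mx ?mulmx0 ?addr0 ?add0r -{1}(submxK M).
  congr block_mx; last by rewrite -scalemxAl addrC subrK.
  rewrite -scalemxAl [ulsubmx M]mx11_scalar mul_mx_scalar scalerA.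
  by rewrite [ulsubmx M 0 0]mxE [usubmx M _ _]mxE mxE mulVf // scale1r.
rewrite M_LU det_mulmx det_lblock !det1 mul1r det_ublock det_mx11 !mxE mul1r.
by congr (_ * \det _); apply/matrixP => i j; rewrite !mxE big_ord1 !mxE mulrC.
Qed.

Lemma prod2_nat_recl (g : nat -> nat -> F) n :
  \prod_(0 <= i < n.+1) \prod_(0 <= j < n.+1) g i j =
  g 0%N 0%N * (\prod_(0 <= j < n) g 0%N j.+1) * (\prod_(0 <= i < n) g i.+1 0%N) *
  \prod_(0 <= i < n) \prod_(0 <= j < n) g i.+1 j.+1.
Proof.
rewrite !big_nat_recl //.
under [X in _ * X = _]eq_bigr => i _ do rewrite big_nat_recl //.
by rewrite big_split /= !mulrA.
Qed.

Lemma det_cauchy n (x y : nat -> F) : (forall i j, x i + y j != 0) ->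
  \det (\matrix_(i < n, j < n) (x i + y j)^-1) =
  Delta x 0 n * Delta y 0 n / \prod_(0 <= i < n) \prod_(0 <= j < n) (x i + y j).
Proof.
elim: n x y => [|n IHn] x y xy_neq0.
  by rewrite det_mx00 /Delta !big_geq // !mul1r invr1.
(* The Schur complement of the corner entry is again a Cauchy matrix, scaled
   on both sides by diagonal matrices. *)
pose a i := (x i.+1 - x 0%N) / (x i.+1 + y 0%N).
pose b j := (y j.+1 - y 0%N) / (x 0%N + y j.+1).
pose x' i := x i.+1; pose y' j := y j.+1.
rewrite (@det_schur_complement n (fun i j => (x i + y j)^-1)) ?invr_eq0 //.
have -> : \matrix_(i < n, j < n) ((x' i + y' j)^-1 - (x' i + y 0%N)^-1 * (x 0%N + y' j)^-1
                                   / (x 0%N + y 0%N)^-1) =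
          diag_mx (\row_i a i) *m \matrix_(i < n, j < n) (x' i + y' j)^-1 *m diag_mx (\row_j b j).
  rewrite mul_diag_mx mul_mx_diag; apply/matrixP => i j; rewrite !mxE /a /b /x' /y'.
  by field; rewrite !xy_neq0 oner_neq0.
rewrite !det_mulmx (det_diag_row _ a) (det_diag_row _ b) IHn => [|i j]; last exact: xy_neq0.
rewrite (Delta_recl x) (Delta_recl y) (prod2_nat_recl (fun i j => x i + y j)) /=.
have prod_ab : \prod_(0 <= i < n) a i * \prod_(0 <= i < n) b i =
    (\prod_(0 <= j < n) (x 0%N - x j.+1)) * (\prod_(0 <= j < n) (y 0%N - y j.+1)) /
    ((\prod_(0 <= i < n) (x i.+1 + y 0%N)) * \prod_(0 <= j < n) (x 0%N + y j.+1)).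
  rewrite -!big_split -prodf_div /=; apply: eq_bigr => i _; rewrite /a /b.
  by field; rewrite !xy_neq0.
rewrite [LHS](_ : _ = (x 0%N + y 0%N)^-1 * (\prod_(0 <= i < n) a i * \prod_(0 <= i < n) b i)
  * (Delta x' 0 n * Delta y' 0 n / \prod_(0 <= i < n) \prod_(0 <= j < n) (x' i + y' j)));
  last by ring.
rewrite prod_ab; field.
by rewrite xy_neq0 andbT; apply/and3P; split; do ?[apply: prodf_nat_neq0 => ?]; apply: xy_neq0.
Qed.

End CauchyDeterminant.

Definition rfact (T : pzRingType) (x : T) (m : nat) : T := \prod_(k < m) (x + k%:R).

Lemma rfactD (T : pzRingType) (x : T) m p :
  rfact x (m + p) = rfact x m * rfact (x + m%:R) p.
Proof.
rewrite /rfact big_split_ord /=; congr (_ * _).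
by apply: eq_bigr => k _; rewrite natrD addrA.
Qed.

Lemma gamma_ratio_rfact (F : fieldType) (R : F) s t :
  gamma_ratio R s t = (rfact R s.+1)^-1 * (rfact (R - t%:R) t)^-1.
Proof.
rewrite /gamma_ratio -[\prod_(k < _) _]/(rfact (R - t%:R) (s + t + 1)).
by rewrite addn1 -addSn addnC rfactD subrK invfM mulrC.
Qed.

Definition inv_fact_sub (F : fieldType) (a b : nat) : F :=
  if (b <= a)%N then ((a - b)`!%:R)^-1 else 0.

Lemma htilde_rfact (F : fieldType) (y : F) (l c : nat) : rfact y c != 0 ->
  htilde (y + c%:R) (l%:Z - c%:Z) = (rfact y l)^-1 * inv_fact_sub F l c * rfact y c.
Proof.
move=> rfact_neq0; rewrite /inv_fact_sub; case: leqP => [lecl | ltlc]; last first.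
  have -> : (l%:Z - c%:Z = Negz (c - l).-1)%R by rewrite NegzE; lia.
  by rewrite mulr0 mul0r.
rewrite -(subnKC lecl) rfactD; set m := (l - c)%N.
have -> : (c + m)%:Z - c%:Z = m by rewrite PoszD addrC addKr.
rewrite /= -[\prod_(k < m) _]/(rfact (y + c%:R) m) addKn !invfM [RHS]mulrC !mulrA.
by rewrite mulfV // mul1r mulrC.
Qed.

Definition frob_form (F : fieldType) (R : F) (mu : seq nat) : F :=
  let d := part_rank mu in
  (\prod_(0 <= i < d) gamma_ratio R (frob_s mu i) (frob_t mu i)) *
  (Delta (fun i => (frob_s mu i)%:R) 0 d * Delta (fun i => (frob_t mu i)%:R) 0 d) /
  ((\prod_(0 <= i < d) ((frob_s mu i)`!%:R * (frob_t mu i)`!%:R)) *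
   \prod_(0 <= i < d) \prod_(0 <= j < d) (frob_s mu i + frob_t mu j + 1)%:R).

Section StildeFrobenius.

Variables (F : fieldType) (R : F).
Hypothesis R_generic : forall a b : nat, R - b%:R + a%:R != 0.
Hypothesis F_char0 : has_pchar0 F.

Lemma natr_neq0 m : (0 < m)%N -> m%:R != 0 :> F.
Proof. by rewrite (pcharf0P _).1 // -lt0n. Qed.

Lemma natr_fact_neq0 m : m`!%:R != 0 :> F.
Proof. exact/natr_neq0/fact_gt0. Qed.

Lemma rfact_shift_neq0 b m : rfact (R - b%:R) m != 0.
Proof. by rewrite prodf_seq_neq0; apply/allP => k _; apply: R_generic. Qed.

Lemma inv_fact_subE a b : inv_fact_sub F a b = (a`!%:R)^-1 * \prod_(k < b) (a%:R - k%:R).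
Proof.
rewrite /inv_fact_sub; case: leqP => [leba | ltab]; last first.
  by rewrite (bigD1 (Ordinal ltab)) //= subrr mul0r mulr0.
have -> : \prod_(k < b) (a%:R - k%:R) = (a ^_ b)%:R :> F.
  rewrite ffact_prod natr_prod; apply: eq_bigr => k _.
  by rewrite natrB // ltnW // (leq_trans (ltn_ord k)).
by rewrite -(ffact_fact leba) natrM invfM mulrAC mulVf ?mul1r // natr_neq0 ?ffact_gt0.
Qed.

Lemma det_inv_fact_sub n (a : nat -> nat) :
  \det (\matrix_(i < n, j < n) inv_fact_sub F (a i) (n - j.+1)) =
  (\prod_(0 <= i < n) (a i)`!%:R)^-1 * Delta (fun i => (a i)%:R) 0 n.
Proof.
rewrite -det_ffact_vandermonde.
have -> : \matrix_(i < n, j < n) inv_fact_sub F (a i) (n - j.+1) =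
  diag_mx (\row_i ((a i)`!%:R)^-1) *m
  \matrix_(i < n, j < n) \prod_(k < n - j.+1) ((a i)%:R - k%:R).
  by rewrite mul_diag_mx; apply/matrixP => i j; rewrite !mxE inv_fact_subE.
by rewrite det_mulmx (det_diag_row _ (fun i => ((a i)`!%:R)^-1)) prodfV.
Qed.

Section Partition.

Variable mu : seq nat.
Hypothesis mu_sorted : sorted geq mu.
Local Notation n := (size mu).
Local Notation d := (part_rank mu).
Local Notation x0 := (R - (size mu).-1%:R).

Lemma stilde_beta :
  stilde R mu = \prod_(0 <= m < n) rfact x0 m / \prod_(0 <= i < n) rfact x0 (beta mu i)
    * (Delta (fun i => (beta mu i)%:R) 0 n / \prod_(0 <= i < n) (beta mu i)`!%:R).
Proof.
pose a : nat -> F := fun i => (rfact x0 (beta mu i))^-1.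
pose b : nat -> F := fun j => rfact x0 (n - j.+1).
rewrite /stilde; have -> : \matrix_(i < n, j < n)
    htilde (R - (j : nat)%:R) ((nth 0%N mu i)%:Z - (i : nat)%:Z + (j : nat)%:Z) =
  diag_mx (\row_i a i) *m \matrix_(i < n, j < n) inv_fact_sub F (beta mu i) (n - j.+1) *m
  diag_mx (\row_j b j).
  rewrite mul_diag_mx mul_mx_diag; apply/matrixP => i j; rewrite !mxE.
  have ltjn := ltn_ord j; have ltin := ltn_ord i.
  have -> : R - j%:R = x0 + (n - j.+1)%:R.
    have -> : (n - j.+1 = n.-1 - j)%N by lia.
    by rewrite natrB; [ring | lia].
  have -> : ((nth 0%N mu i)%:Z - i%:Z + j%:Z = (beta mu i)%:Z - (n - j.+1)%:Z)%R.
    by rewrite /beta; lia.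
  by rewrite htilde_rfact // rfact_shift_neq0.
rewrite !det_mulmx (det_diag_row _ a) (det_diag_row _ b) det_inv_fact_sub prodfV.
rewrite [in RHS]big_nat_rev /=; under [in RHS]eq_bigr do rewrite add0n.
by rewrite /a /b mulrC; ring.
Qed.

Lemma rfact_cobeta i : (i < d)%N ->
  rfact x0 (cobeta mu i) = gamma_ratio R (frob_s mu i) (frob_t mu i) * rfact x0 (beta mu i).
Proof.
move=> ltid; have := frob_t_lt_size mu_sorted ltid => lttn.
have -> : beta mu i = (cobeta mu i + (frob_s mu i + frob_t mu i + 1))%N.
  by rewrite beta_frob_s // /cobeta; lia.
rewrite rfactD.
have -> : x0 + (cobeta mu i)%:R = R - (frob_t mu i)%:R.
  have n_gt0 : (0 < n)%N by apply: leq_ltn_trans lttn.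
  rewrite (natr_cobeta _ mu_sorted ltid) -[in (n%:R)](prednK n_gt0) -natr1; ring.
rewrite mulrCA /gamma_ratio -[\prod_(k < _) _]/(rfact _ _) mulVf ?mulr1 //.
exact: rfact_shift_neq0.
Qed.

Lemma prod_rfact_beta :
  \prod_(0 <= m < n) rfact x0 m =
  (\prod_(0 <= i < d) gamma_ratio R (frob_s mu i) (frob_t mu i)) *
  \prod_(0 <= i < n) rfact x0 (beta mu i).
Proof.
rewrite (prod_beta_cobeta mu_sorted) (big_cat_nat (leq0n d) (part_rank_le_size mu)) /=.
rewrite mulrC mulrA -big_split /=; congr (_ * _).
by apply: eq_big_nat => i /andP [_ ltid]; rewrite rfact_cobeta.
Qed.

Lemma stilde_frob : stilde R mu = frob_form R mu.
Proof.
have := Delta_beta_frobenius F mu_sorted.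
rewrite stilde_beta prod_rfact_beta /frob_form big_split /=.
set Db := Delta _ 0 n; set Ds := Delta _ 0 d; set Dt := Delta _ 0 d.
set Pb := \prod_(0 <= i < n) _`!%:R; set Ps := \prod_(0 <= i < d) _`!%:R.
set Pt := \prod_(0 <= i < d) _`!%:R; set Z := \prod_(0 <= i < d) \prod_(0 <= j < d) _.
move=> Db_frob.
have [Pb_neq0 Ps_neq0 Pt_neq0] : [/\ Pb != 0, Ps != 0 & Pt != 0].
  by split; apply: prodf_nat_neq0 => i; apply: natr_fact_neq0.
have Z_neq0 : Z != 0.
  by do 2!apply: prodf_nat_neq0 => ?; rewrite addn1 natr_neq0.
have rfact_neq0 : \prod_(0 <= i < n) rfact x0 (beta mu i) != 0.
  by apply: prodf_nat_neq0 => i; apply: rfact_shift_neq0.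
have -> : Db = Ds * Dt * Pb / (Ps * Pt * Z).
  by rewrite -Db_frob; field; rewrite Ps_neq0 Pt_neq0 Z_neq0.
by field; rewrite rfact_neq0 Pb_neq0 Ps_neq0 Pt_neq0 Z_neq0.
Qed.

Lemma det_gamma_frob :
  \det (\matrix_(i < d, j < d)
          (gamma_ratio R (frob_s mu i) (frob_t mu j) /
           ((frob_s mu i)`!%:R * (frob_t mu j)`!%:R * (1 + frob_s mu i + frob_t mu j)%:R)))
  = frob_form R mu.
Proof.
set s := frob_s mu; set t := frob_t mu.
pose a : nat -> F := fun i => (rfact R (s i).+1)^-1 / (s i)`!%:R.
pose b : nat -> F := fun j => (rfact (R - (t j)%:R) (t j))^-1 / (t j)`!%:R.
pose x : nat -> F := fun i => (s i + 1)%:R; pose y : nat -> F := fun j => (t j)%:R.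
have xy_neq0 i j : x i + y j != 0 by rewrite /x /y -natrD addnAC addn1 natr_neq0.
have -> : \matrix_(i < d, j < d) (gamma_ratio R (s i) (t j) /
            ((s i)`!%:R * (t j)`!%:R * (1 + s i + t j)%:R)) =
          diag_mx (\row_i a i) *m \matrix_(i < d, j < d) (x i + y j)^-1 *m diag_mx (\row_j b j).
  rewrite mul_diag_mx mul_mx_diag; apply/matrixP => i j; rewrite !mxE gamma_ratio_rfact.
  rewrite /a /b /x /y -natrD addnAC add1n addn1 !invfM [((t j).+1 + _)%N]addnC addnS addSn.
  ring.
rewrite !det_mulmx (det_diag_row _ a) (det_diag_row _ b) det_cauchy //.
have -> : Delta x 0 d = Delta (fun i => (s i)%:R) 0 d.
  by apply: eq_bigr => i _; apply: eq_bigr => j _; rewrite /x !natrD; ring.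
have -> : \prod_(0 <= i < d) \prod_(0 <= j < d) (x i + y j) =
          \prod_(0 <= i < d) \prod_(0 <= j < d) (s i + t j + 1)%:R.
  by apply: eq_bigr => i _; apply: eq_bigr => j _; rewrite /x /y -natrD addnAC.
have ab : \prod_(0 <= i < d) a i * \prod_(0 <= i < d) b i =
    \prod_(0 <= i < d) gamma_ratio R (s i) (t i) / \prod_(0 <= i < d) ((s i)`!%:R * (t i)`!%:R).
  rewrite -big_split -prodf_div; apply: eq_bigr => i _; rewrite gamma_ratio_rfact invfM /=.
  by rewrite /a /b; ring.
by rewrite /frob_form -/s -/t mulrAC ab invfM; ring.
Qed.

End Partition.

Lemma stilde_hook s t :
  stilde R (hook s t) = gamma_ratio R s t / (s`!%:R * t`!%:R * (1 + s + t)%:R).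
Proof.
rewrite stilde_frob ?hook_sorted // /frob_form part_rank_hook /Delta !big_nat1.
by rewrite frob_s_hook frob_t_hook !big_geq // !mulr1 addn1 add1n addSn.
Qed.

End StildeFrobenius.

Lemma RX_generic (a b : nat) : RX - b%:R + a%:R != 0.
Proof.
have -> : RX - b%:R + a%:R = tofrac ('X + (a%:R - b%:R)%:P : {poly rat}).
  by rewrite polyCB !polyC_natr rmorphD rmorphB /= !rmorph_nat /RX; ring.
by rewrite tofrac_eq0 -size_poly_eq0 size_XaddC.
Qed.

Lemma ratfun_char0 : has_pchar0 ratfun.
Proof.
apply/pcharf0P => m; have -> : m%:R = tofrac (m%:R : {poly rat}) by rewrite rmorph_nat.
by rewrite tofrac_eq0 -polyC_natr polyC_eq0 pnatr_eq0.
Qed.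

Unset Implicit Arguments.

Theorem mainTheorem9 (lam : seq nat) :
  is_partition lam -> lam != [::] ->
  stilde RX lam =
    \det (\matrix_(i < part_rank lam, j < part_rank lam)
            stilde RX (hook (frob_s lam i) (frob_t lam j)))
  /\
  \det (\matrix_(i < part_rank lam, j < part_rank lam)
          stilde RX (hook (frob_s lam i) (frob_t lam j)))
  = \det (\matrix_(i < part_rank lam, j < part_rank lam)
            (gamma_ratio RX (frob_s lam i) (frob_t lam j) /
             ((frob_s lam i)`!%:R * (frob_t lam j)`!%:R
              * (1 + frob_s lam i + frob_t lam j)%:R))).
Proof.
move=> /andP [lam_sorted _] _.
have -> : \det (\matrix_(i < part_rank lam, j < part_rank lam)
                 stilde RX (hook (frob_s lam i) (frob_t lam j))) = frob_form RX lam.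
  under eq_mx do rewrite (stilde_hook RX_generic ratfun_char0).
  exact: (det_gamma_frob _ ratfun_char0).
by rewrite (stilde_frob RX_generic ratfun_char0 lam_sorted) (det_gamma_frob _ ratfun_char0).
Qed.
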